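(* Let $n\ge2$ and let $\mathcal D$ be the $n$-adic filtration of $[0,1]$. Then every Haar function $h$ on an interval $I\in\mathcal D$ can be written as a sum $h=\sum_k h_k$ of at most $n$ elementary Haar functions $h_k$ on $I$, such that moreover $|h|=\sum_k|h_k|$ pointwise.
   Context: The $n$-adic filtration of $[0,1]$: $\mathcal D_0=\{[0,1]\}$ and each interval of $\mathcal D_k$ is split into $n$ consecutive subintervals of equal length (its children $\mathrm{ch}(I)$), forming $\mathcal D_{k+1}$; $\mathcal D=\bigcup_k\mathcal D_k$. A Haar function on $I\in\mathcal D$ is a function $h$ supported on $I$, constant on each child of $I$, with $\int_I h\,dx=0$. A Haar function on $I$ is elementary if it is nonzero on at most two children of $I$, i.e. it has the form $c(\mathbf 1_{I_{k_1}}-\mathbf 1_{I_{k_2}})$ with $I_{k_1},I_{k_2}\in\mathrm{ch}(I)$ and $c$ a constant. *)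

From HB Require Import structures.
From mathcomp Require Import all_boot all_order all_algebra.
From mathcomp Require Import all_classical all_reals all_analysis.
Set Implicit Arguments. Unset Strict Implicit. Unset Printing Implicit Defensive.
Import Order.TTheory GRing.Theory Num.Theory.
Local Open Scope classical_set_scope.
Local Open Scope ring_scope.

Definition dint {R : realType} (n k j : nat) : set R :=
  `[ (j%:R / (n%:R ^+ k)), (j.+1%:R / (n%:R ^+ k)) [.

Definition child {R : realType} (n k j i : nat) : set R := @dint R n k.+1 (n * j + i).

Definition is_haar {R : realType} (n k j : nat) (h : R -> R) : Prop :=
  [/\ (forall x, ~ dint n k j x -> h x = 0),
      (forall i, (i < n)%N -> exists c : R, forall x, child n k j i x -> h x = c)
    & (\int[lebesgue_measure]_(x in (dint n k j : set R)) (h x)%:E = 0)%E ].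

Definition is_elem_haar {R : realType} (n k j : nat) (h : R -> R) : Prop :=
  exists (c : R) (i1 i2 : nat), [/\ (i1 < n)%N, (i2 < n)%N &
    h = (fun x => c * (\1_(child n k j i1) x - \1_(child n k j i2) x))].

From HB Require Import structures.
From mathcomp Require Import all_boot all_order all_algebra.
From mathcomp Require Import all_classical all_reals all_analysis.
From mathcomp Require Import lra zify.
Import Order.TTheory GRing.Theory Num.Theory.
Local Open Scope classical_set_scope.
Local Open Scope ring_scope.

(* A Haar function on I is the step function sum_i c_i 1_{I_i} over the children
   of I, and its zero integral says exactly that sum_i c_i = 0.  A zero-sum vector
   c splits greedily into dipoles m (e_p - e_q), m >= 0, taken between a positive
   and a negative entry with m = min (c_p, -c_q): each step empties one more entry,
   so at most n dipoles occur, and as no dipole ever opposes the sign of c, the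
   absolute values add up as well.  Dipoles on the children are elementary Haar
   functions. *)

Definition dipole {I : eqType} {R : pzRingType} (m : R) (p q : I) (i : I) : R :=
  m * ((i == p)%:R - (i == q)%:R).

Section DipoleDecomposition.
Set Implicit Arguments. Unset Strict Implicit.
Variables (I : finType) (R : realDomainType).
Implicit Types (c : I -> R) (m : R) (p q i : I).

Lemma dipoleE m p q i : p != q ->
  dipole m p q i = if i == p then m else if i == q then - m else 0.
Proof.
move=> pq; rewrite /dipole; case: (eqVneq i p) => [->|_].
  by rewrite (negbTE pq) subr0 mulr1.
by case: (eqVneq i q) => _; rewrite ?sub0r ?mulrN1 ?mulr0n ?oppr0 ?mulr0.
Qed.

Lemma sum_dipole m p q : \sum_i dipole m p q i = 0.
Proof.
have sum_eq1 r : \sum_i ((i == r)%:R : R) = 1.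
  by rewrite (bigD1 r) //= eqxx big1 ?addr0 // => i /negbTE ->.
by rewrite -mulr_sumr sumrB !sum_eq1 subrr mulr0.
Qed.

Lemma zero_sum_signs c i0 : \sum_i c i = 0 -> c i0 != 0 ->
  (exists p, 0 < c p) /\ (exists q, c q < 0).
Proof.
move=> c0 ci0; split; apply/not_existsP => c_sign; move/negP: ci0; apply.
  rewrite -oppr_eq0; apply/eqP.
  apply: (psumr_eq0P (P := predT) (F := fun i => - c i)) => // [i _|].
    by rewrite oppr_ge0 leNgt; apply/negP/c_sign.
  by rewrite sumrN c0 oppr0.
apply/eqP; apply: (psumr_eq0P (P := predT) _ c0) => // i _.
by rewrite leNgt; apply/negP/c_sign.
Qed.

(* With mass [min (c p) (- c q)] the dipole cancels [c] at [p] or at [q] and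
   nowhere reverses the sign of [c]. *)
Lemma dipole_peel c i0 : \sum_i c i = 0 -> c i0 != 0 ->
  exists m p q,
    [/\ (#|support (fun i => c i - dipole m p q i)%R| < #|support c|)%N
      & forall i, `|c i| = `|dipole m p q i| + `|c i - dipole m p q i|].
Proof.
move=> c0 ci0; have [[p cp] [q cq]] := zero_sum_signs c0 ci0.
have pq : p != q by apply: contraTneq cp => ->; rewrite -leNgt ltW.
pose m := Num.min (c p) (- c q).
have m_gt0 : 0 < m by rewrite lt_min cp oppr_gt0 cq.
have m_le : m <= c p /\ m <= - c q by rewrite !ge_min !lexx orbT.
exists m, p, q; split.
  apply: proper_card; apply/properP; split.
    apply/fintype.subsetP => i; rewrite !inE dipoleE //.
    case: (eqVneq i p) => [->|_]; first by rewrite (gt_eqF cp).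
    by case: (eqVneq i q) => [->|_]; [rewrite (lt_eqF cq) | rewrite subr0].
  have [mE|mE] : m = c p \/ m = - c q by rewrite /m minEle; case: ifP; [left|right].
    by exists p; rewrite !inE ?(gt_eqF cp) // dipoleE // eqxx /= mE subrr eqxx.
  exists q; rewrite !inE ?(lt_eqF cq) // dipoleE // eqxx (eq_sym q p) (negbTE pq) /=.
  by rewrite mE opprK subrr eqxx.
move=> i; rewrite dipoleE //; case: (eqVneq i p) => [->|_].
  by rewrite gtr0_norm // gtr0_norm // ger0_norm; lra.
case: (eqVneq i q) => [->|_]; last by rewrite normr0 add0r subr0.
by rewrite ltr0_norm // normrN gtr0_norm // ler0_norm; lra.
Qed.

Lemma dipole_decomposition c : \sum_i c i = 0 ->
  exists s : seq (R * I * I),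
    [/\ (size s <= #|support c|)%N,
        forall i, c i = \sum_(t <- s) dipole t.1.1 t.1.2 t.2 i
      & forall i, `|c i| = \sum_(t <- s) `|dipole t.1.1 t.1.2 t.2 i| ].
Proof.
have [N] := ubnP #|support c|; elim: N c => // N IH c cN c0.
have [[i0 ci0]|c_eq0] := pselect (exists i0, c i0 != 0); last first.
  have ci0 i : c i = 0 by apply/eqP/negPn/negP => ci; apply: c_eq0; exists i.
  by exists [::]; split => [|i|i]; rewrite ?big_nil ?ci0 ?normr0.
have [m [p [q [lt_supp normE]]]] := dipole_peel c0 ci0.
have c'0 : \sum_i (c i - dipole m p q i) = 0 by rewrite sumrB c0 sum_dipole subrr.
have [s [size_s cE c'normE]] := IH _ (leq_trans lt_supp cN) c'0.
exists ((m, p, q) :: s); split.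
- by rewrite /= (leq_ltn_trans size_s lt_supp).
- by move=> i; rewrite big_cons -cE addrC subrK.
- by move=> i; rewrite big_cons -c'normE normE.
Qed.

End DipoleDecomposition.

Section NadicChildren.
Set Implicit Arguments. Unset Strict Implicit.
Variables (R : realType) (n : nat).
Hypothesis n_gt0 : (0 < n)%N.

Lemma mem_dint k j (x : R) : dint n k j x <-> j%:R <= x * n%:R ^+ k < j.+1%:R.
Proof.
by rewrite /dint /= in_itv /= ler_pdivrMr ?ltr_pdivlMr ?exprn_gt0 ?ltr0n.
Qed.

Lemma lebesgue_measure_dint k j :
  lebesgue_measure (dint n k j : set R) = ((n%:R ^+ k)^-1)%:E.
Proof.
rewrite /dint lebesgue_measure_itv /= lte_fin ltr_pM2r ?ltr_nat ?invr_gt0 ?exprn_gt0 ?ltr0n //.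
by rewrite -EFinD -mulrBl -natr1 addrAC subrr add0r mul1r ltnSn.
Qed.

Variables (k j : nat).

Lemma mem_child i (x : R) :
  child n k j i x <-> (n * j + i)%:R <= x * n%:R ^+ k * n%:R < (n * j + i).+1%:R.
Proof. by rewrite /child mem_dint exprSr mulrA. Qed.

Lemma child_sub i : (i < n)%N -> (child n k j i : set R) `<=` dint n k j.
Proof.
move=> lt_in x /mem_child/andP[lb ub]; apply/mem_dint/andP.
have n_pos : 0 < (n%:R : R) by rewrite ltr0n.
split.
  by rewrite -(ler_pM2r n_pos) -natrM; apply: le_trans lb; rewrite ler_nat; lia.
by rewrite -(ltr_pM2r n_pos) -natrM; apply: lt_le_trans ub _; rewrite ler_nat; lia.
Qed.

Lemma child_uniq i i' (x : R) : child n k j i x -> child n k j i' x -> i = i'.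
Proof.
move=> /mem_child/andP[lb ub] /mem_child/andP[lb' ub'].
have : (n * j + i < (n * j + i').+1)%N by rewrite -(ltr_nat R); apply: le_lt_trans ub'.
have : (n * j + i' < (n * j + i).+1)%N by rewrite -(ltr_nat R); apply: le_lt_trans ub.
lia.
Qed.

Lemma child_ex (x : R) : dint n k j x -> exists i : 'I_n, child n k j i x.
Proof.
move=> /mem_dint/andP[lb ub]; set y := x * n%:R ^+ k * n%:R.
have n_pos : 0 < (n%:R : R) by rewrite ltr0n.
have y_ge0 : 0 <= y by rewrite mulr_ge0 ?ler0n // (le_trans _ lb).
have /andP[t_lb t_ub] := truncn_itv y_ge0.
have lo : (n * j <= Num.truncn y)%N by rewrite truncn_ge_nat // natrM mulrC ler_pM2r.
have hi : (Num.truncn y < j.+1 * n)%N.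
  by rewrite -(ltr_nat R) natrM; apply: le_lt_trans t_lb _; rewrite ltr_pM2r.
have lt_in : (Num.truncn y - n * j < n)%N by lia.
by exists (Ordinal lt_in); apply/mem_child; rewrite /= subnKC //; apply/andP.
Qed.

Lemma child_or_out (x : R) : (exists i : 'I_n, child n k j i x) \/ ~ dint n k j x.
Proof. by have [/child_ex|] := pselect (dint n k j x); [left|right]. Qed.

Lemma indic_child (p i : 'I_n) (x : R) :
  child n k j i x -> \1_(child n k j p) x = (i == p)%:R :> R.
Proof.
move=> xi; rewrite indicE; case: (eqVneq i p) => [<-|ip]; first by rewrite mem_set.
by rewrite memNset // => xp; rewrite (val_inj (child_uniq xi xp)) eqxx in ip.
Qed.

Lemma indic_child_out (p : 'I_n) (x : R) :
  ~ dint n k j x -> \1_(child n k j p) x = 0 :> R.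
Proof. by move=> xout; rewrite indicE memNset // => /(child_sub (ltn_ord p)). Qed.

Definition child_step (c : 'I_n -> R) (x : R) : R :=
  \sum_(i < n) c i * \1_(child n k j i) x.

Lemma child_stepE c (i : 'I_n) x : child n k j i x -> child_step c x = c i.
Proof.
move=> xi; rewrite /child_step (bigD1 i) //= (indic_child _ xi) eqxx mulr1.
by rewrite big1 ?addr0 // => p pi; rewrite (indic_child _ xi) eq_sym (negbTE pi) mulr0.
Qed.

Lemma child_step_out c x : ~ dint n k j x -> child_step c x = 0.
Proof. by move=> xout; rewrite /child_step big1 // => p _; rewrite indic_child_out ?mulr0. Qed.

Lemma child_step_sum (T : Type) (s : seq T) (F : T -> 'I_n -> R) x :
  child_step (fun i => \sum_(t <- s) F t i) x = \sum_(t <- s) child_step (F t) x.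
Proof. by rewrite /child_step exchange_big; apply: eq_bigr => i _; rewrite mulr_suml. Qed.

Lemma normr_child_step c x : `|child_step c x| = child_step (fun i => `|c i|) x.
Proof.
have [[i xi]|xout] := child_or_out x; first by rewrite !(child_stepE _ xi).
by rewrite !child_step_out ?normr0.
Qed.

Lemma child_step_dipole m (p q : 'I_n) :
  child_step (dipole m p q) = fun x => m * (\1_(child n k j p) x - \1_(child n k j q) x).
Proof.
apply/funext => x; have [[i xi]|xout] := child_or_out x.
  by rewrite (child_stepE _ xi) !(indic_child _ xi).
by rewrite child_step_out // !indic_child_out // subrr mulr0.
Qed.

Lemma child_left_end i : child n k j i ((n * j + i)%:R / n%:R ^+ k.+1 : R).
Proof.
apply/mem_child; rewrite -mulrA -exprSr mulfVK ?lexx ?ltr_nat ?ltnSn //.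
by rewrite expf_neq0 // pnatr_eq0 -lt0n.
Qed.

Lemma haar_child_step h : is_haar n k j h ->
  h = child_step (fun i => h ((n * j + i)%:R / n%:R ^+ k.+1)).
Proof.
case=> h_out h_const _; apply/funext => x.
have [[i xi]|xout] := child_or_out x; last by rewrite child_step_out // h_out.
have [c hc] := h_const i (ltn_ord i).
by rewrite (child_stepE _ xi) (hc _ xi) (hc _ (child_left_end i)).
Qed.

Lemma integrable_indic_child i :
  lebesgue_measure.-integrable (dint n k j) (fun x => (\1_(child n k j i) x)%:E : \bar R).
Proof.
by apply: (integrableS _ _ _ (integrable_indic_itv _ _ true true)) => //; apply: measurable_itv.
Qed.

Lemma integral_child_step c :
  (\int[lebesgue_measure]_(x in dint n k j) (child_step c x)%:E
    = ((\sum_i c i) / n%:R ^+ k.+1)%:E)%E.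
Proof.
have mD : measurable (dint n k j : set R) by exact: measurable_itv.
have int_term i : lebesgue_measure.-integrable (dint n k j)
    (fun x => (c i * \1_(child n k j i) x)%:E).
  by under eq_fun do rewrite EFinM; apply: integrableZl => //; exact: integrable_indic_child.
under eq_integral do rewrite -sumEFin.
rewrite integral_sum // mulr_suml -sumEFin; apply: eq_bigr => i _.
under eq_integral do rewrite EFinM.
rewrite integralZl //; last exact: integrable_indic_child.
rewrite integral_indic; [|exact: measurable_itv|exact: measurable_itv].
rewrite setIidl; last exact: child_sub (ltn_ord i).
by rewrite EFinM; congr (_ * _)%E; exact: lebesgue_measure_dint.
Qed.

Lemma haar_coefficients h : is_haar n k j h ->
  exists c : 'I_n -> R, h = child_step c /\ \sum_i c i = 0.
Proof.
move=> h_haar; have h_step := haar_child_step h_haar.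
set c := (fun i => _) in h_step; exists c; split => //.
case: h_haar => _ _; rewrite h_step integral_child_step => -[] /eqP.
by rewrite mulf_eq0 invr_eq0 expf_eq0 pnatr_eq0 (gtn_eqF n_gt0) andbF orbF => /eqP.
Qed.

End NadicChildren.

Arguments child_step {R} n k j c x.

Theorem lemma6p4 (R : realType) (n k j : nat) (h : R -> R) :
  (2 <= n)%N -> (j < n ^ k)%N -> is_haar n k j h ->
  exists hs : seq (R -> R),
    [/\ (size hs <= n)%N,
        (forall g, g \in hs -> is_elem_haar n k j g),
        (forall x, h x = \sum_(g <- hs) g x)
      & (forall x, `|h x| = \sum_(g <- hs) `|g x|)].
Proof.
(* The bound on j only places I inside [0, 1]. *)
move=> n_ge2 _ h_haar; have n_gt0 : (0 < n)%N by apply: leq_trans n_ge2.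
have [c [-> c0]] := haar_coefficients n_gt0 h_haar.
have [s [size_s cE normE]] := dipole_decomposition c0.
exists [seq child_step n k j (dipole t.1.1 t.1.2 t.2) | t <- s]; split.
- by rewrite size_map (leq_trans size_s) // (leq_trans (max_card _)) ?card_ord.
- move=> g /mapP[t _ ->]; rewrite (child_step_dipole n_gt0).
  by exists t.1.1, t.1.2, t.2; split.
- by move=> x; rewrite big_map (funext cE) child_step_sum.
- move=> x; rewrite big_map (normr_child_step n_gt0) (funext normE) child_step_sum.
  by apply: eq_bigr => t _; rewrite (normr_child_step n_gt0).
Qed.
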